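(* Let $\lambda:[0,\infty)\to(0,\infty)$ be continuous, let $n\ge 2$, and let $\{A(t)\}_{t\ge 0}$ be the ancestral process with variable population size with sample size $n$ and coalescent-rate function $\lambda$. Let $L(t)=\int_0^t \mathbb{1}_{\{A(s)>1\}}A(s)\,ds$, $T_{\mathrm{MRCA}}=\inf\{t\ge 0: A(t)\le 1\}$, $\mathcal{L}=L(T_{\mathrm{MRCA}})$, and $F_1(t,x)=\mathbb{P}\{A(t)=1,\,L(t)\le x\}$. Then for every $x\in[0,\infty)$ and every $\bar t\ge x/2$, \[ \mathbb{P}\{\mathcal{L}\le x\}=\mathbb{P}\{A(\bar t)=1,\,L(\bar t)\le x\}=F_1(\bar t,x). \]
   Context: The ancestral process with variable population size is the time-inhomogeneous Markov chain $\{A(t)\}_{t\ge0}$ on $\{1,\dots,n\}$ with $A(0)=n$ and infinitesimal generator $\lambda(t)Q$, where $Q$ is the $n\times n$ matrix with $Q_{k,k}=-\binom{k}{2}$, $Q_{k,k-1}=\binom{k}{2}$ and all other entries $0$; i.e. from state $k$ it jumps to $k-1$ at rate $\lambda(t)\binom{k}{2}$, and state $1$ is absorbing. $L(t)$ is the accumulated tree length and $\mathcal{L}$ the total tree length. *)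

From HB Require Import structures.
From mathcomp Require Import all_boot all_order all_algebra.
From mathcomp Require Import all_classical all_reals all_analysis.
Set Implicit Arguments. Unset Strict Implicit. Unset Printing Implicit Defensive.
Import Order.TTheory GRing.Theory Num.Theory.
Import numFieldNormedType.Exports.
Local Open Scope classical_set_scope.
Local Open Scope ring_scope.

Section Ancestral.
Variable R : realType.

Definition Qrate (n k l : nat) : R :=
  if [&& (1 <= k)%N, (k <= n)%N, (1 <= l)%N & (l <= n)%N] then
    (if l == k then - ('C(k, 2))%:R
     else if l == k.-1 then ('C(k, 2))%:R else 0)
  else 0.

(* Ptr s t i j = P(A(t) = j | A(s) = i) for 0 <= s <= t, states in {1..n}:
   the transition function of the Markov chain with generator lambda(t) Q,
   i.e. the solution of the Kolmogorov forward equation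
   d/dt Ptr(s,t) = Ptr(s,t) (lambda(t) Q),  Ptr(s,s) = I. *)
Definition kolmogorov_forward (n : nat) (lam : R -> R)
    (Ptr : R -> R -> nat -> nat -> R) : Prop :=
  forall s, 0 <= s -> forall i j, (1 <= i <= n)%N -> (1 <= j <= n)%N ->
    [/\ Ptr s s i j = (i == j)%:R,
        (fun u => Ptr s u i j) x @[x --> s^'+] --> Ptr s s i j &
        forall t, s < t ->
          is_derive t 1 (fun u => Ptr s u i j)
            (lam t * \sum_(1 <= k < n.+1) Ptr s t i k * Qrate n k j)].

(* {A(t)}_{t>=0} is the ancestral process with variable population size,
   sample size n and coalescent-rate function lam, on the probability
   space (Omega, P): integer valued cadlag paths in {1..n}, measurable
   marginals, and finite-dimensional distributions of the time-inhomogeneous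
   Markov chain started at A(0) = n with generator lam(t) Q. *)
Definition ancestral_process d (Omega : measurableType d)
    (P : probability Omega R) (n : nat) (lam : R -> R)
    (A : R -> Omega -> nat) : Prop :=
  [/\ (forall t k, 0 <= t -> measurable [set w | A t w = k]),
      (forall w t, 0 <= t -> (1 <= A t w <= n)%N),
      (* right-continuous paths (right-constant, since integer valued) *)
      (forall w t, 0 <= t -> exists2 e : R, 0 < e &
          forall u, t <= u -> u < t + e -> A u w = A t w),
      (forall w t, 0 < t -> exists2 e : R, 0 < e & exists c : nat,
          forall u, t - e < u -> u < t -> A u w = c) &
      exists Ptr : R -> R -> nat -> nat -> R,
        kolmogorov_forward n lam Ptr /\
        forall (m : nat) (s : nat -> R) (k : nat -> nat),
          s 0%N = 0 ->
          (forall j, (j < m)%N -> s j <= s j.+1) ->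
          (forall j, (j <= m)%N -> (1 <= k j <= n)%N) ->
          P [set w | forall j, (j <= m)%N -> A (s j) w = k j] =
          (((k 0%N == n)%:R *
             \prod_(j < m) Ptr (s j) (s j.+1) (k j) (k j.+1)) : R)%:E].

Definition branch_rate (Omega : Type) (A : R -> Omega -> nat) (w : Omega)
    (s : R) : R :=
  if (1 < A s w)%N then (A s w)%:R else 0.

Definition tree_length_upto (Omega : Type) (A : R -> Omega -> nat)
    (T : \bar R) (w : Omega) : \bar R :=
  (\int[@lebesgue_measure R]_(s in [set s : R | (0 <= s)%R /\ (s%:E <= T)%E])
     (branch_rate A w s)%:E)%E.

Definition tree_length (Omega : Type) (A : R -> Omega -> nat)
    (t : R) (w : Omega) : \bar R :=
  tree_length_upto A t%:E w.

(* T_MRCA = inf { t >= 0 : A(t) <= 1 }  (= +oo if the set is empty) *)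
Definition T_MRCA (Omega : Type) (A : R -> Omega -> nat) (w : Omega)
    : \bar R :=
  ereal_inf [set t%:E | t in [set t : R | 0 <= t /\ (A t w <= 1)%N]].

Definition total_tree_length (Omega : Type) (A : R -> Omega -> nat)
    (w : Omega) : \bar R :=
  tree_length_upto A (T_MRCA A w) w.

Definition F1 d (Omega : measurableType d) (P : probability Omega R)
    (A : R -> Omega -> nat) (t x : R) : \bar R :=
  P [set w | A t w = 1%N /\ (tree_length A t w <= x%:E)%E].

End Ancestral.

From HB Require Import structures.
From mathcomp Require Import all_boot all_order all_algebra.
From mathcomp Require Import all_classical all_reals all_analysis.
From mathcomp Require Import measurable_realfun.
From mathcomp Require Import zify ring lra.
Set Implicit Arguments. Unset Strict Implicit. Unset Printing Implicit Defensive.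
Import Order.TTheory GRing.Theory Num.Theory.
Import numFieldNormedType.Exports.
Local Open Scope classical_set_scope.
Local Open Scope ring_scope.

(* Before T_MRCA at least two lineages are alive, so L(T_MRCA) >= 2 T_MRCA and
   {total length <= x} forces T_MRCA <= x/2 <= tbar.  On paths along which state 1
   is absorbing this gives A(tbar) = 1 and L(tbar) = L(T_MRCA); conversely A(tbar) = 1
   gives T_MRCA <= tbar and L(T_MRCA) <= L(tbar).  State 1 is almost surely absorbing:
   for k >= 2 the forward equation makes t |-> P(A(t) = k | A(s) = 1) solve
   p' = - lam C(k,2) p with p(s) = 0 (downward induction on k), so it vanishes, and by
   right-continuity a departure from 1 is witnessed at rational times.  Right-continuity
   also makes (w, s) |-> A(s, w) jointly measurable, so both tree lengths are random
   variables by Fubini-Tonelli. *)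

(* [f ^+ 2] has derivative [- 2 c f ^+ 2 <= 0] on [s, +oo[, so it cannot leave [0]. *)
Lemma is_derive_decay_eq0 (R : realType) (f c : R -> R) (s : R) :
  f s = 0 -> f x @[x --> s^'+] --> f s ->
  (forall u, s < u -> 0 <= c u) ->
  (forall u, s < u -> is_derive u 1 f (- (c u * f u))) ->
  forall t, s <= t -> f t = 0.
Proof.
move=> fs0 fcont c0 df t; rewrite le_eqVlt => /predU1P[<-//|st].
have dsq u : s < u -> is_derive u (1 : R) (f * f)%R (f u *: - (c u * f u) + f u *: - (c u * f u)).
  by move=> su; apply: is_deriveM; apply: df.
have sq_cont : {within `[s, t], continuous (f * f)%R}.
  apply: derivable_oo_LRcontinuous_within; split.
  - by move=> u; rewrite in_itv /= => /andP[su _]; have [] := dsq u su.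
  - exact: cvgM.
  - apply: cvg_at_left_filter; apply: differentiable_continuous.
    by apply/derivable1_diffP; have [] := dsq t st.
have in_dsq u : u \in `]s, t[ -> is_derive u (1 : R) (f * f)%R
    (f u *: - (c u * f u) + f u *: - (c u * f u)).
  by rewrite in_itv /= => /andP[su _]; exact: dsq.
have [u uin sq_mvt] := MVT st in_dsq sq_cont.
have su : s < u by move: uin; rewrite in_itv => /andP[].
rewrite !fctE in sq_mvt.
have : f t ^+ 2 <= 0.
  move: sq_mvt; rewrite fs0 mulr0 subr0 -expr2 => ->.
  apply: mulr_le0_ge0; last by rewrite subr_ge0 ltW.
  rewrite /GRing.scale /=.
  have -> : f u * - (c u * f u) + f u * - (c u * f u) = - (2 * c u * f u ^+ 2) by ring.
  by rewrite oppr_le0 mulr_ge0 ?sqr_ge0 // mulr_ge0 ?c0.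
by move=> sq_le0; apply/eqP; rewrite -sqrf_eq0 eq_le sq_le0 sqr_ge0.
Qed.

Lemma bigcapT_measurable_rat d (T : measurableType d) (F : rat -> set T) :
  (forall q, measurable (F q)) -> measurable (\bigcap_q F q).
Proof.
move=> mF; rewrite -[X in measurable X]setCK setC_bigcap.
by apply/measurableC/bigcupT_measurable_rat => q; exact/measurableC.
Qed.

Lemma negligible_bigcup_countable d (T : sigmaRingType d) (R : realFieldType)
    (mu : {measure set T -> \bar R}) (I : countType) (F : I -> set T) :
  (forall i, mu.-negligible (F i)) -> mu.-negligible (\bigcup_i F i).
Proof.
move=> F0; apply: (@negligibleS _ _ _ _ (\bigcup_k oapp F set0 (unpickle k))).
  by move=> t [i _ Fit]; exists (pickle i) => //; rewrite pickleK.
apply: negligible_bigcup => k.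
by case: (unpickle k) => [i|] /=; [exact: F0 | exact: negligible_set0].
Qed.

Lemma sum_mul_Qrate (R : realType) (n k : nat) (p : nat -> R) : (1 <= k <= n)%N ->
  \sum_(1 <= j < n.+1) p j * Qrate R n j k =
  (if (k < n)%N then p k.+1 * 'C(k.+1, 2)%:R else 0) - p k * 'C(k, 2)%:R.
Proof.
move=> kn; set F := fun j => p j * 'C(j, 2)%:R.
have col j : (1 <= j < n.+1)%N ->
    p j * Qrate R n j k = (if j == k.+1 then F j else 0) - (if j == k then F j else 0).
  move=> jn; rewrite /Qrate /F (_ : [&& _, _, _ & _]); last by lia.
  have [->|jk] := eqVneq j k; first by rewrite (ltn_eqF (ltnSn k)) sub0r mulrN.
  have [->|jk1] := eqVneq j k.+1; first by rewrite /= eqxx subr0.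
  have /negbTE-> : k != j.-1 by apply: contra_neq jk1 => ->; rewrite prednK // (andP jn).1.
  by rewrite mulr0 subr0.
rewrite (eq_big_nat _ _ col) sumrB -!big_mkcond !big_nat1_eq.
by rewrite !ltnS kn.
Qed.

Section ForwardEquation.
Variables (R : realType) (n : nat) (lam : R -> R) (Ptr : R -> R -> nat -> nat -> R).
Hypothesis forward : kolmogorov_forward n lam Ptr.
Hypothesis lam_gt0 : forall t, 0 <= t -> 0 < lam t.

(* Downward induction on [k]: once [Ptr s _ 1 k.+1 = 0], the forward equation for
   column [k] reads [p' = - lam 'C(k, 2) p]. *)
Lemma transition_from1_eq0 s k : 0 <= s -> (2 <= k <= n)%N ->
  forall t, s <= t -> Ptr s t 1 k = 0.
Proof.
move=> s0.
have step j : (2 <= j <= n)%N ->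
    ((j < n)%N -> forall t, s <= t -> Ptr s t 1 j.+1 = 0) ->
    forall t, s <= t -> Ptr s t 1 j = 0.
  move=> jn next; have j1 : (1 <= j <= n)%N by lia.
  have one_n : (1 <= 1 <= n)%N by lia.
  have [P0 Pcont Pder] := @forward s s0 1 j one_n j1.
  apply: (@is_derive_decay_eq0 _ _ (fun u => lam u * 'C(j, 2)%:R)) => //.
  - by rewrite P0; case: j jn {j1 next P0 Pcont Pder} => [|[]].
  - by move=> u su; rewrite mulr_ge0 // ltW // lam_gt0 // ltW // (le_lt_trans s0).
  move=> u su; have := Pder u su; rewrite sum_mul_Qrate //.
  have -> : (if (j < n)%N then Ptr s u 1 j.+1 * 'C(j.+1, 2)%:R else 0) = 0.
    by case: ifP => // jn1; rewrite next ?mul0r // ltW.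
  by rewrite sub0r mulrN [Ptr s u 1 j * _]mulrC mulrA; apply.
suff down m : forall j, (n <= j + m)%N -> (2 <= j <= n)%N -> forall t, s <= t -> Ptr s t 1 j = 0.
  by move=> kn; apply: (down n) => //; lia.
elim: m => [|m IH] j jm jn; apply: step => // jn1.
- lia.
- by apply: IH; lia.
Qed.

End ForwardEquation.

Section Paths.
Variables (R : realType) (Omega : Type) (n : nat) (A : R -> Omega -> nat).
Hypothesis A_range : forall w t, 0 <= t -> (1 <= A t w <= n)%N.
Hypothesis A_right_const : forall w t, 0 <= t -> exists2 e : R, 0 < e &
  forall u, t <= u -> u < t + e -> A u w = A t w.

Lemma exists_rat_right w t b : 0 <= t -> t < b ->
  exists q : rat, [/\ t < ratr q, ratr q < b & A (ratr q) w = A t w].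
Proof.
move=> t0 tb; have [e e0 Ae] := A_right_const w t0.
have /rat_in_itvoo[q] : t < Num.min b (t + e) by rewrite lt_min tb ltrDl.
rewrite in_itv /= lt_min => /andP[tq /andP[qb qe]].
by exists q; split => //; rewrite Ae ?ltW.
Qed.

Lemma T_MRCA_ge0 w : (0 <= T_MRCA A w)%E.
Proof. by apply/ereal_infP => _ [u [u0 _] <-]; rewrite lee_fin. Qed.

Lemma T_MRCA_le w u : 0 <= u -> (A u w <= 1)%N -> (T_MRCA A w <= u%:E)%E.
Proof. by move=> u0 Au; apply: ereal_inf_lbound; exists u. Qed.

Lemma A_ge2_before_T_MRCA w s : 0 <= s -> (s%:E < T_MRCA A w)%E -> (2 <= A s w)%N.
Proof. by move=> s0; apply: contraTT; rewrite -leqNgt -leNgt; exact: T_MRCA_le. Qed.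

Lemma le_T_MRCA_ratP w s : 0 <= s -> (s%:E <= T_MRCA A w)%E <->
  (forall q : rat, 0 <= ratr q :> R -> ratr q < s -> (2 <= A (ratr q) w)%N).
Proof.
move=> s0; split=> [sT q q0 qs|A2].
  by apply: A_ge2_before_T_MRCA => //; apply: lt_le_trans sT; rewrite lte_fin.
rewrite leNgt; apply/negP => /ereal_inf_lt[_ [u [u0 Au] <-]]; rewrite lte_fin => us.
have [q [uq qs Aq]] := exists_rat_right w u0 us.
by move: (A2 q (le_trans u0 (ltW uq)) qs); rewrite Aq leqNgt ltnS Au.
Qed.

Lemma A_T_MRCA w tau : T_MRCA A w = tau%:E -> A tau w = 1%N.
Proof.
move=> Ttau; have tau0 : 0 <= tau by rewrite -lee_fin -Ttau T_MRCA_ge0.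
have [e e0 Ae] := A_right_const w tau0.
have : (T_MRCA A w < (tau + e)%:E)%E by rewrite Ttau lte_fin ltrDl.
move=> /ereal_inf_lt[_ [u [u0 Au] <-]]; rewrite lte_fin => ue.
have tau_u : tau <= u by rewrite -lee_fin -Ttau T_MRCA_le.
by have := A_range w u0; rewrite -(Ae u) //; lia.
Qed.

Lemma T_MRCA_finite w t : (T_MRCA A w <= t%:E)%E -> exists tau, T_MRCA A w = tau%:E.
Proof. by move: (T_MRCA_ge0 w); case: (T_MRCA A w) => [tau||] //; exists tau. Qed.

Definition absorbed_in_1 w := forall u v, 0 <= u -> u <= v -> A u w = 1%N -> A v w = 1%N.

Lemma A_after_T_MRCA w tau s : absorbed_in_1 w -> T_MRCA A w = tau%:E -> tau <= s ->
  A s w = 1%N.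
Proof.
move=> abs Ttau tau_s; apply: (abs tau) => //; last exact: A_T_MRCA.
by rewrite -lee_fin -Ttau T_MRCA_ge0.
Qed.

End Paths.

Section TreeLength.
Variables (R : realType) (d : measure_display) (Omega : measurableType d).
Variables (n : nat) (A : R -> Omega -> nat).
Hypothesis A_meas : forall t k, 0 <= t -> measurable [set w | A t w = k].
Hypothesis A_range : forall w t, 0 <= t -> (1 <= A t w <= n)%N.
Hypothesis A_right_const : forall w t, 0 <= t -> exists2 e : R, 0 < e &
  forall u, t <= u -> u < t + e -> A u w = A t w.

Lemma measurable_A_pred (b : bool) t (P : pred nat) : (b -> 0 <= t) ->
  measurable [set w | b -> P (A t w)].
Proof.
case: b => [/(_ isT) t0|_]; last by rewrite (_ : [set w | _] = setT) //; apply/seteqP.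
rewrite (_ : [set w | _] = \bigcup_(k in P) [set w | A t w = k]).
  by apply: bigcup_measurable => k _; exact: A_meas.
by apply/seteqP; split=> [w /(_ isT) Pw|w [k Pk /= ->] _]; first by exists (A t w).
Qed.

Lemma A_eq_ratP w s k : 0 <= s -> A s w = k <->
  exists r : rat, s < ratr r /\ forall q : rat, s <= ratr q < (ratr r : R) -> A (ratr q) w = k.
Proof.
move=> s0; split=> [Ask|[r [sr Ar]]].
  have [e e0 Ae] := A_right_const w s0.
  have /rat_in_itvoo[r] : s < s + e by rewrite ltrDl.
  rewrite in_itv /= => /andP[sr re]; exists r; split=> // q /andP[sq qr].
  by rewrite -Ask Ae // (lt_trans qr).
have [q [sq qr <-]] := exists_rat_right A_right_const w s0 sr.
by apply: Ar; rewrite (ltW sq).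
Qed.

Definition occupation k : set (Omega * R) := [set p | 0 <= p.2 /\ A p.2 p.1 = k].

Lemma occupation_rat k : occupation k =
  (setT `*` `[0, +oo[) `&` \bigcup_(r : rat) ((setT `*` `]-oo, ratr r[) `&`
    \bigcap_(q : rat) ((setT `*` `]ratr q, +oo[) `|`
      ([set w | (0 : R) <= ratr q < (ratr r : R) -> A (ratr q) w == k] `*` setT))).
Proof.
apply/seteqP; split=> [[w s] [/= s0 /(A_eq_ratP w k s0)[r [sr Ar]]]|[w s] /=].
  split; first by rewrite in_itv /= s0.
  exists r => //; split; first by rewrite /= in_itv.
  move=> q _ /=; rewrite in_itv /= andbT; have [qs|sq] := ltP (ratr q) s; first by left.
  by right; split=> // /andP[_ qr]; apply/eqP/Ar; rewrite sq.
rewrite in_itv /= andbT => -[[_ s0]] [r _] [[_ sr] Ar]; move: sr; rewrite /= in_itv /= => sr.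
split=> //; apply/(A_eq_ratP w k s0); exists r; split=> // q /andP[sq qr].
case: (Ar q I) => [[_ /=]|[/= Aq _]]; first by rewrite in_itv /= andbT ltNge sq.
by apply/eqP/Aq; rewrite qr (le_trans s0 sq).
Qed.

Lemma measurable_occupation k : measurable (occupation k).
Proof.
rewrite occupation_rat; apply: measurableI; first exact: measurableX.
apply: bigcupT_measurable_rat => r; apply: measurableI; first exact: measurableX.
apply: bigcapT_measurable_rat => q; apply: measurableU; first exact: measurableX.
apply: measurableX => //; apply: (@measurable_A_pred _ _ (pred1 k)).
by case/andP.
Qed.

Lemma branch_rate_occupation w s : 0 <= s ->
  branch_rate A w s = \sum_(2 <= k < n.+1) k%:R * \1_(occupation k) (w, s).
Proof.
move=> s0; have /andP[_ An] := A_range w s0.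
have occ k : ((w, s) \in occupation k) = (A s w == k).
  by apply/idP/eqP => [/set_mem[]|Ask] //; apply/mem_set.
under eq_bigr do rewrite indicE occ mulr_natr mulrb eq_sym.
by rewrite -big_mkcond big_nat1_eq /branch_rate ltnS An andbT.
Qed.

Let measurable_occupation_sum : measurable_fun setT
  (fun p : Omega * R => (\sum_(2 <= k < n.+1) k%:R * \1_(occupation k) p : R)%:E).
Proof.
apply/measurable_EFinP/measurable_sum => k.
apply: measurable_funM => //; apply: measurable_indic; exact: measurable_occupation.
Qed.

Lemma measurable_branch_rate :
  measurable_fun (setT `*` `[0, +oo[ : set (Omega * R)) (fun p => (branch_rate A p.1 p.2)%:E).
Proof.
apply: eq_measurable_fun (measurable_funS _ _ measurable_occupation_sum) => //.
by move=> [w s] /set_mem[_ /=]; rewrite in_itv /= andbT => s0; rewrite branch_rate_occupation.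
Qed.

Lemma measurable_branch_rate_path w :
  measurable_fun (`[0, +oo[ : set R) (fun s => (branch_rate A w s)%:E).
Proof.
have mpath := measurableT_comp measurable_occupation_sum (pair1_measurable w).
apply: eq_measurable_fun (measurable_funS _ (@subsetT R _) mpath) => //.
by move=> s /set_mem; rewrite /= in_itv /= andbT => s0; rewrite branch_rate_occupation.
Qed.

Definition stochastic_interval (T : Omega -> \bar R) : set (Omega * R) :=
  [set p | 0 <= p.2 /\ (p.2%:E <= T p.1)%E].

Lemma tree_length_upto_fubini T w : tree_length_upto A (T w) w =
  fubini_F lebesgue_measure
    ((fun p => (branch_rate A p.1 p.2)%:E) \_ (stochastic_interval T)) w.
Proof. by rewrite /tree_length_upto integral_mkcond. Qed.

Lemma measurable_tree_length_upto T : measurable (stochastic_interval T) ->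
  measurable_fun setT (fun w => tree_length_upto A (T w) w).
Proof.
move=> mT; rewrite (funext (tree_length_upto_fubini T)).
apply: measurable_fun_fubini_tonelli_F.
  apply/(measurable_restrictT _ mT); apply: measurable_funS measurable_branch_rate.
    exact: measurableX.
  by move=> [w s] [/= s0 _]; split=> //; rewrite /= in_itv /= s0.
by move=> p; rewrite /patch; case: ifP => // _; rewrite lee_fin /branch_rate; case: ifP.
Qed.

Lemma measurable_stochastic_interval_cst (t : R) :
  measurable (stochastic_interval (fun=> t%:E)).
Proof.
rewrite (_ : stochastic_interval _ = setT `*` `[0, t]); first exact: measurableX.
by apply/seteqP; split=> [[w s] [/= s0 st]|[w s] [_ /=]]; rewrite /= in_itv /= ?s0 //= => /andP.
Qed.

Lemma measurable_stochastic_interval_T_MRCA :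
  measurable (stochastic_interval (T_MRCA A)).
Proof.
rewrite (_ : stochastic_interval _ = (setT `*` `[0, +oo[) `&` \bigcap_(q : rat)
    ((setT `*` `]-oo, ratr q]) `|`
     ([set w | (0 : R) <= ratr q -> (2 <= A (ratr q) w)%N] `*` setT))).
  apply: measurableI; first exact: measurableX.
  apply: bigcapT_measurable_rat => q; apply: measurableU; first exact: measurableX.
  by apply: measurableX => //; apply: (@measurable_A_pred _ _ (leq 2)).
apply/seteqP; split=> [[w s] [/= s0 /(le_T_MRCA_ratP A_right_const w s0) A2]|[w s] /=].
  split; first by rewrite /= in_itv /= s0.
  move=> q _ /=; rewrite in_itv /=; have [sq|qs] := leP s (ratr q); first by left.
  by right; split=> // q0; apply: A2.
rewrite in_itv /= andbT => -[[_ s0] A2]; split=> //.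
apply/(le_T_MRCA_ratP A_right_const w s0) => q q0 qs.
by case: (A2 q I) => [[_ /=]|[/= /(_ q0) //]]; rewrite in_itv /= leNgt qs.
Qed.

Lemma horizon_itv (r : R) : [set s : R | 0 <= s /\ (s%:E <= r%:E)%E] = `[0, r]%classic.
Proof. by apply/seteqP; split=> s /=; rewrite in_itv /= lee_fin; [case=> -> -> | case/andP]. Qed.

Lemma measurable_horizon (T : \bar R) : measurable [set s : R | 0 <= s /\ (s%:E <= T)%E].
Proof.
case: T => [r||]; first by rewrite horizon_itv.
  rewrite (_ : [set s | _] = `[0, +oo[%classic); first exact: measurable_itv.
  by apply/seteqP; split=> s /=; rewrite in_itv /= andbT leey; [case | ].
by rewrite (_ : [set s | _] = set0) //; apply/seteqP; split=> s //= [_]; rewrite leeNy_eq.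
Qed.

Lemma le_tree_length_upto w (T1 T2 : \bar R) : (T1 <= T2)%E ->
  (tree_length_upto A T1 w <= tree_length_upto A T2 w)%E.
Proof.
move=> T12; apply: ge0_subset_integral.
- exact: measurable_horizon.
- exact: measurable_horizon.
- apply: measurable_funS (measurable_branch_rate_path w) => //.
  by move=> s [s0 _]; rewrite /= in_itv /= s0.
- by move=> s _; rewrite lee_fin /branch_rate; case: ifP.
- by move=> s [s0 sT1]; split=> //; apply: le_trans T12.
Qed.

Lemma double_le_tree_length w r : 0 <= r -> (r%:E < T_MRCA A w)%E ->
  ((2 * r)%:E <= tree_length A r w)%E.
Proof.
move=> r0 rT; rewrite /tree_length /tree_length_upto horizon_itv.
have -> : (2 * r)%:E = (\int[lebesgue_measure]_(s in `[0%R, r]) (cst 2%:E) s)%E.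
  rewrite integral_cst //; have := lebesgue_measure_itv `[0%R, r]; rewrite /= lte_fin => ->.
  case: ltP => [_|r_le0]; first by rewrite sube0 EFinM.
  by rewrite (_ : r = 0) ?mulr0 ?mule0 //; apply/le_anti; rewrite r_le0 r0.
apply: ge0_le_integral => //.
- by move=> s _; rewrite lee_fin.
- apply: measurable_funS (measurable_branch_rate_path w) => //.
  by move=> s; rewrite /= !in_itv /= => /andP[->].
move=> s; rewrite /= in_itv /= => /andP[s0 sr].
have sT : (s%:E < T_MRCA A w)%E by apply: le_lt_trans rT; rewrite lee_fin.
by have A2 := A_ge2_before_T_MRCA s0 sT; rewrite lee_fin /branch_rate A2 ler_nat.
Qed.

Lemma T_MRCA_le_half w x : 0 <= x -> (total_tree_length A w <= x%:E)%E ->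
  (T_MRCA A w <= (x / 2)%:E)%E.
Proof.
move=> x0 Lx; rewrite leNgt; apply/negP => xT.
have [r xr rT] : exists2 r : R, x / 2 < r & (r%:E < T_MRCA A w)%E.
  move: xT; case: (T_MRCA A w) => [tau||] //; last by exists (x / 2 + 1); rewrite ?ltry //; lra.
  by rewrite lte_fin => xtau; exists ((x / 2 + tau) / 2); rewrite ?lte_fin; lra.
have r0 : 0 <= r by apply: ltW; apply: le_lt_trans xr; lra.
have := le_trans (double_le_tree_length r0 rT) (le_tree_length_upto w (ltW rT)).
by move=> /le_trans/(_ Lx); rewrite lee_fin; lra.
Qed.

Lemma tree_length_after_T_MRCA w t : absorbed_in_1 A w -> (T_MRCA A w <= t%:E)%E ->
  tree_length A t w = total_tree_length A w.
Proof.
move=> abs Tt; have [tau Ttau] := T_MRCA_finite Tt.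
rewrite /tree_length /total_tree_length /tree_length_upto [LHS]integral_mkcond [RHS]integral_mkcond.
apply: eq_integral => s _; rewrite /patch.
case: ifPn => [/set_mem[s0 st]|not_st]; case: ifPn => [/set_mem[s0_ sT]|not_sT] //.
  have tau_s : tau <= s.
    rewrite leNgt -lte_fin -Ttau; apply: contra not_sT => sT.
    by apply/mem_set; split=> //; exact: ltW.
  by rewrite /branch_rate (A_after_T_MRCA A_range A_right_const abs Ttau tau_s).
by case/negP: not_st; apply/mem_set; split=> //; exact: le_trans sT Tt.
Qed.

Lemma total_tree_length_le w t : 0 <= t -> A t w = 1%N ->
  (total_tree_length A w <= tree_length A t w)%E.
Proof. by move=> t0 At1; apply: le_tree_length_upto; apply: T_MRCA_le; rewrite ?At1. Qed.

Lemma tree_length_le_of_total w x t : absorbed_in_1 A w -> 0 <= x -> x / 2 <= t ->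
  (total_tree_length A w <= x%:E)%E -> A t w = 1%N /\ (tree_length A t w <= x%:E)%E.
Proof.
move=> abs x0 xt Lx; have Tt := le_trans (T_MRCA_le_half x0 Lx) (lee_tofin xt : _ <= t%:E)%E.
rewrite tree_length_after_T_MRCA //; split=> //; have [tau Ttau] := T_MRCA_finite Tt.
by apply: (A_after_T_MRCA A_range A_right_const abs Ttau); rewrite -lee_fin -Ttau.
Qed.

End TreeLength.

Section AbsorptionAtOne.
Variables (R : realType) (d : measure_display) (Omega : measurableType d).
Variables (P : probability Omega R) (n : nat) (lam : R -> R) (A : R -> Omega -> nat).
Variable Ptr : R -> R -> nat -> nat -> R.
Hypothesis lam_gt0 : forall t, 0 <= t -> 0 < lam t.
Hypothesis forward : kolmogorov_forward n lam Ptr.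
Hypothesis A_meas : forall t k, 0 <= t -> measurable [set w | A t w = k].
Hypothesis A_range : forall w t, 0 <= t -> (1 <= A t w <= n)%N.
Hypothesis A_right_const : forall w t, 0 <= t -> exists2 e : R, 0 < e &
  forall u, t <= u -> u < t + e -> A u w = A t w.
Hypothesis fdd : forall (m : nat) (s : nat -> R) (k : nat -> nat),
  s 0%N = 0 -> (forall j, (j < m)%N -> s j <= s j.+1) ->
  (forall j, (j <= m)%N -> (1 <= k j <= n)%N) ->
  P [set w | forall j, (j <= m)%N -> A (s j) w = k j] =
  (((k 0%N == n)%:R * \prod_(j < m) Ptr (s j) (s j.+1) (k j) (k j.+1)) : R)%:E.

(* The finite-dimensional laws are only given on time grids starting at 0, hence the
   initial state [k0]. *)
Lemma escape_negligible u v k0 k : 0 <= u <= v -> (1 <= k0 <= n)%N -> (2 <= k <= n)%N ->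
  P.-negligible [set w | [/\ A 0 w = k0, A u w = 1%N & A v w = k]].
Proof.
move=> /andP[u0 uv] k0n kn; pose s := nth v [:: 0; u]; pose ks := nth k [:: k0; 1%N].
have -> : [set w | [/\ A 0 w = k0, A u w = 1%N & A v w = k]] =
    [set w | forall j, (j <= 2)%N -> A (s j) w = ks j].
  apply/seteqP; split=> w /=; first by case=> A0 Au Av [|[|[|j]]].
  by move=> Aj; split; [exact: (Aj 0%N) | exact: (Aj 1%N) | exact: (Aj 2%N)].
apply/negligibleP.
  rewrite (_ : [set w | _] = [set w | A (s 0%N) w = ks 0%N] `&` [set w | A (s 1%N) w = ks 1%N]
    `&` [set w | A (s 2%N) w = ks 2%N]).
    by apply: measurableI; [apply: measurableI|]; apply: A_meas; rewrite //= (le_trans u0).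
  apply/seteqP; split=> [w Aj|w [[A0 A1] A2] [|[|[|j]]] //]; split; [split|]; exact: Aj.
apply: eq_trans (@fdd 2 s ks _ _ _) _.
- by [].
- by move=> [|[|j]].
- by move=> [|[|[|j]]] //= _; rewrite /ks /=; lia.
by rewrite !big_ord_recr big_ord0 /s /ks /= (transition_from1_eq0 forward lam_gt0) // !mulr0.
Qed.

Lemma not_absorbed_negligible : P.-negligible [set w | ~ absorbed_in_1 A w].
Proof.
pose E (x : rat * rat * nat * nat) : set Omega := let: (q, r, k0, k) := x in
  if [&& (0 : R) <= ratr q <= (ratr r : R), (1 <= k0 <= n)%N & (2 <= k <= n)%N]
  then [set w | [/\ A 0 w = k0, A (ratr q) w = 1%N & A (ratr r) w = k]] else set0.
apply: (@negligibleS _ _ _ P (\bigcup_x E x)); last first.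
  apply: negligible_bigcup_countable => -[[[q r] k0] k] /=.
  by case: ifP => [/and3P[qr k0n kn]|_]; [exact: escape_negligible | exact: negligible_set0].
move=> w /= not_abs; apply: contrapT => notE; apply: not_abs => u v u0 uv Au1.
apply: contrapT => Av1; have v0 := le_trans u0 uv.
have [r [vr _ Ar]] := exists_rat_right A_right_const w v0 (ltr_pwDr ltr01 (lexx v)).
have [q [uq qr Aq]] := exists_rat_right A_right_const w u0 (le_lt_trans uv vr).
apply: notE; exists (q, r, A 0 w, A v w) => //=; rewrite ifT; first by split; rewrite ?Aq.
have := A_range w v0; have := A_range w (lexx 0); rewrite (le_trans u0 (ltW uq)) (ltW qr) /=.
by move=> -> /=; move: Av1; lia.
Qed.

End AbsorptionAtOne.

Theorem lemma1 (R : realType) (d : measure_display) (Omega : measurableType d)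
    (P : probability Omega R) (lam : R -> R) (n : nat)
    (A : R -> Omega -> nat) :
  {within `[0, +oo[, continuous lam} ->
  (forall t, 0 <= t -> 0 < lam t) ->
  (2 <= n)%N ->
  ancestral_process P n lam A ->
  forall x tbar : R, 0 <= x -> x / 2 <= tbar ->
    P [set w | (total_tree_length A w <= x%:E)%E] =
      P [set w | A tbar w = 1%N /\ (tree_length A tbar w <= x%:E)%E] /\
    P [set w | A tbar w = 1%N /\ (tree_length A tbar w <= x%:E)%E] =
      F1 P A tbar x.
Proof.
move=> _ lam_gt0 _ [A_meas A_range A_right_const _ [Ptr [forward fdd]]] x t x0 xt.
split=> //; have t0 : 0 <= t by apply: le_trans xt; rewrite divr_ge0.
have measurable_le (f : Omega -> \bar R) :
    measurable_fun setT f -> measurable [set w | (f w <= x%:E)%E].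
  move=> mf; rewrite -[X in measurable X]setTI.
  by apply: measurable_lee => //; exact: measurable_cst.
set F := [set w | _ /\ _]; set L := [set w | _].
have mF : measurable F.
  apply: measurableI; first exact: A_meas.
  apply/measurable_le/(measurable_tree_length_upto A_meas A_range A_right_const).
  exact: measurable_stochastic_interval_cst.
have mL : measurable L.
  apply/measurable_le/(measurable_tree_length_upto A_meas A_range A_right_const).
  exact: measurable_stochastic_interval_T_MRCA.
have FL : F `<=` L.
  move=> w [At1 Ltx]; apply: le_trans Ltx.
  by have := total_tree_length_le A_meas A_range A_right_const t0 At1; apply.
have LF : L `\` F `<=` [set w | ~ absorbed_in_1 A w].
  move=> w [Lx notF] abs; apply: notF.
  by have := tree_length_le_of_total A_meas A_range A_right_const abs x0 xt Lx; apply.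
rewrite -(setDUK FL) measureU0 //; first exact: measurableD.
apply: measure_negligible; first exact: measurableD.
exact: negligibleS LF (not_absorbed_negligible lam_gt0 forward A_meas A_range A_right_const fdd).
Qed.
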